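(* Let $\mathcal D$ be universal with at least two blocks, let $\mathcal B$ be the block containing $\min(\mathcal D\setminus\{0\})$ and $\mathbf m=\max\mathcal B$. Let $\mathrm M=(M,d)\in\mathfrak U_{\mathcal D}$, let $a\in M$, and let $X=\{x\in M: d(a,x)<\mathbf m\}$. Then the subspace of $\mathrm M$ on $M\setminus X$ is a copy of $\mathrm M$ in $\mathrm M$ (i.e. is isometric to $\mathrm M$).
   Context: $\mathcal D$ is a finite subset of $\mathbb R_{\ge0}$ containing $0$. $\mathfrak U_{\mathcal D}$ is the class of countable homogeneous metric spaces (every isometry between finite subspaces extends to an isometry of the space onto itself) with distance set exactly $\mathcal D$ into which every finite metric space with distances in $\mathcal D$ embeds isometrically; $\mathcal D$ is universal if this class is nonempty. For $r\in\mathcal D$ with $r<\max\mathcal D$, $r^{+}$ is the smallest element of $\mathcal D$ larger than $r$; for $r>0$, $r^{-}$ is the largest element of $\mathcal D$ smaller than $r$. A block of $\mathcal D$ is a nonempty set $\mathcal B=\{b_0<b_1<\dots<b_n\}\subseteq\mathcal D\setminus\{0\}$ such that $b_0>2b_0^{-}$, $b_{i+1}=b_i^{+}$ for all $i<n$, and $b_i+b_0\ge b_{i+1}$ for all $i<n$; for universal $\mathcal D$ the blocks partition $\mathcal D\setminus\{0\}$. *)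

From Stdlib Require Import Reals List.
Import ListNotations.
Open Scope R_scope.

Definition is_metric (M : Type) (d : M -> M -> R) : Prop :=
  (forall x y, d x y = 0 <-> x = y) /\
  (forall x y, d x y = d y x) /\
  (forall x y z, d x z <= d x y + d y z).

Definition countable_type (M : Type) : Prop :=
  exists f : M -> nat, forall x y, f x = f y -> x = y.

Definition distance_set_is (D : list R) (M : Type) (d : M -> M -> R) : Prop :=
  (forall x y, In (d x y) D) /\ (forall r, In r D -> exists x y, d x y = r).

Definition homogeneous (M : Type) (d : M -> M -> R) : Prop :=
  forall (n : nat) (u v : nat -> M),
    (forall i j, (i < n)%nat -> (j < n)%nat -> d (u i) (u j) = d (v i) (v j)) ->
    exists g : M -> M,
      (forall x y, d (g x) (g y) = d x y) /\
      (forall y, exists x, g x = y) /\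
      (forall i, (i < n)%nat -> g (u i) = v i).

Definition finite_metric_in (D : list R) (n : nat) (e : nat -> nat -> R) : Prop :=
  (forall i j, (i < n)%nat -> (j < n)%nat -> (e i j = 0 <-> i = j)) /\
  (forall i j, (i < n)%nat -> (j < n)%nat -> e i j = e j i) /\
  (forall i j k, (i < n)%nat -> (j < n)%nat -> (k < n)%nat -> e i k <= e i j + e j k) /\
  (forall i j, (i < n)%nat -> (j < n)%nat -> In (e i j) D).

Definition embeds_all_finite (D : list R) (M : Type) (d : M -> M -> R) : Prop :=
  forall (n : nat) (e : nat -> nat -> R), finite_metric_in D n e ->
    exists u : nat -> M, forall i j, (i < n)%nat -> (j < n)%nat -> d (u i) (u j) = e i j.

Definition in_UD (D : list R) (M : Type) (d : M -> M -> R) : Prop :=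
  is_metric M d /\ countable_type M /\ homogeneous M d /\
  distance_set_is D M d /\ embeds_all_finite D M d.

Definition universal (D : list R) : Prop :=
  exists (M : Type) (d : M -> M -> R), in_UD D M d.

Definition is_pred (D : list R) (r p : R) : Prop :=
  In p D /\ p < r /\ forall q, In q D -> q < r -> q <= p.

Definition is_succ (D : list R) (r s : R) : Prop :=
  In s D /\ r < s /\ forall q, In q D -> r < q -> s <= q.

(* A block B = [b0; b1; ...; bn] (listed in increasing order), required to be
   maximal. *)
Definition is_block (D : list R) (B : list R) : Prop :=
  exists b0 rest, B = b0 :: rest /\
    (forall b, In b B -> In b D /\ 0 < b) /\
    (exists p, is_pred D b0 p /\ 2 * p < b0) /\
    (forall i, (S i < length B)%nat ->
        is_succ D (nth i B 0) (nth (S i) B 0) /\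
        nth (S i) B 0 <= nth i B 0 + b0) /\
    (forall c, is_succ D (last B 0) c -> last B 0 + b0 < c).

Definition is_min_pos (D : list R) (r : R) : Prop :=
  In r D /\ 0 < r /\ forall q, In q D -> 0 < q -> r <= q.

Definition is_max_of (B : list R) (m : R) : Prop :=
  In m B /\ forall b, In b B -> b <= m.

From Stdlib Require Import Reals List Lra Lia ClassicalEpsilon.
Open Scope R_scope.

(* Let Y be the complement of the open ball of radius m around a. A finite
   one-point extension problem over Y with distances in D is solved in M by
   some z0 (universality plus homogeneity); adding a itself to the problem at
   distance max(m, d(a, z0)) keeps it consistent, because the given points lie
   outside the ball, and any solution of the enlarged problem lies in Y. So M
   and Y are countable spaces with the same extension property, and a
   back-and-forth argument makes them isometric. *)

Section MetricFacts.
Variables (T : Type) (d : T -> T -> R).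
Hypothesis Hmet : is_metric T d.

Lemma dist_self x : d x x = 0.
Proof. apply (proj1 Hmet); reflexivity. Qed.

Lemma dist_eq0 x y : d x y = 0 -> x = y.
Proof. apply (proj1 Hmet). Qed.

Lemma dist_sym x y : d x y = d y x.
Proof. apply (proj1 (proj2 Hmet)). Qed.

Lemma dist_triangle x y z : d x z <= d x y + d y z.
Proof. apply (proj2 (proj2 Hmet)). Qed.

Lemma dist_nonneg x y : 0 <= d x y.
Proof.
  pose proof (dist_triangle x y x). rewrite dist_self, (dist_sym y x) in H. lra.
Qed.

End MetricFacts.

Definition extension_property (D : list R) (T : Type) (d : T -> T -> R)
    (S : T -> Prop) : Prop :=
  forall (n : nat) (p : nat -> T) (r : nat -> R),
    (forall i j, (i < n)%nat -> (j < n)%nat -> p i = p j -> i = j) ->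
    (forall i, (i < n)%nat -> S (p i) /\ In (r i) D /\ 0 < r i) ->
    (forall i j, (i < n)%nat -> (j < n)%nat ->
       d (p i) (p j) <= r i + r j /\ r i <= r j + d (p i) (p j)) ->
    exists z, S z /\ forall i, (i < n)%nat -> d z (p i) = r i.

Lemma extension_property_inhabited D T d S (t0 : T) :
  extension_property D T d S -> exists z, S z.
Proof.
  intros HS. destruct (HS 0%nat (fun _ => t0) (fun _ => 0)) as [z [Sz _]]; try lia.
  exists z; exact Sz.
Qed.

Lemma finite_metric_in_pullback D T d (n : nat) (p : nat -> T) :
  is_metric T d -> (forall x y, In (d x y) D) ->
  (forall i j, (i < n)%nat -> (j < n)%nat -> p i = p j -> i = j) ->
  finite_metric_in D n (fun i j => d (p i) (p j)).
Proof.
  intros Hmet HdD Hinj. split; [|split; [|split]].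
  - intros i j Hi Hj. split.
    + intros E. apply Hinj; auto. apply (dist_eq0 T d Hmet), E.
    + intros ->. apply (dist_self T d Hmet).
  - intros i j _ _. apply (dist_sym T d Hmet).
  - intros i j k _ _ _. apply (dist_triangle T d Hmet).
  - intros i j _ _. apply HdD.
Qed.

Definition adjoin_point (n : nat) (e : nat -> nat -> R) (r : nat -> R) (i j : nat) : R :=
  if Nat.ltb i n then (if Nat.ltb j n then e i j else r i)
  else (if Nat.ltb j n then r j else 0).

Lemma finite_metric_in_adjoin D n e r :
  In 0 D -> finite_metric_in D n e ->
  (forall i, (i < n)%nat -> In (r i) D /\ 0 < r i) ->
  (forall i j, (i < n)%nat -> (j < n)%nat -> e i j <= r i + r j /\ r i <= r j + e i j) ->
  finite_metric_in D (S n) (adjoin_point n e r).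
Proof.
  intros HD0 [He0 [Hsym [Htri HeD]]] Hr Hcompat.
  unfold adjoin_point. split; [|split; [|split]].
  - intros i j Hi Hj.
    destruct (Nat.ltb_spec i n), (Nat.ltb_spec j n).
    + apply He0; auto.
    + pose proof (Hr i H). split; intro; [lra | lia].
    + pose proof (Hr j H0). split; intro; [lra | lia].
    + split; intro; [lia | reflexivity].
  - intros i j _ _.
    destruct (Nat.ltb_spec i n), (Nat.ltb_spec j n); auto.
  - intros i j k _ _ _.
    destruct (Nat.ltb_spec i n), (Nat.ltb_spec j n), (Nat.ltb_spec k n);
    repeat match goal with
      | Hi : (?i < n)%nat, Hj : (?j < n)%nat |- _ =>
          lazymatch goal with
          | _ : e i j <= r i + r j /\ r i <= r j + e i j |- _ => fail
          | _ => pose proof (Hcompat i j Hi Hj); pose proof (Hsym i j Hi Hj)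
          end
      | Hi : (?i < n)%nat |- _ =>
          lazymatch goal with
          | _ : 0 < r i |- _ => fail
          | _ => pose proof (proj2 (Hr i Hi))
          end
      end;
    first [apply Htri; assumption | lra].
  - intros i j _ _.
    destruct (Nat.ltb_spec i n), (Nat.ltb_spec j n); auto; apply Hr; auto.
Qed.

Lemma in_UD_extension_property D M d :
  In 0 D -> in_UD D M d -> extension_property D M d (fun _ => True).
Proof.
  intros HD0 [Hmet [_ [Hhom [[HdD _] Hemb]]]] n p r Hinj Hr Hcompat.
  assert (Hfin : finite_metric_in D (S n) (adjoin_point n (fun i j => d (p i) (p j)) r)).
  { apply finite_metric_in_adjoin; auto.
    - apply finite_metric_in_pullback; auto.
    - intros i Hi. apply Hr; auto. }
  destruct (Hemb _ _ Hfin) as [u Hu].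
  destruct (Hhom n u p) as [g [Hg [_ Hgu]]].
  { intros i j Hi Hj. rewrite Hu by lia. unfold adjoin_point.
    rewrite (proj2 (Nat.ltb_lt i n) Hi), (proj2 (Nat.ltb_lt j n) Hj). reflexivity. }
  exists (g (u n)). split; [exact I |]. intros i Hi.
  rewrite <- (Hgu i Hi), Hg, Hu by lia. unfold adjoin_point.
  rewrite Nat.ltb_irrefl, (proj2 (Nat.ltb_lt i n) Hi). reflexivity.
Qed.

Lemma extension_property_ball_complement D M d (a : M) (m : R) :
  In 0 D -> in_UD D M d -> In m D -> 0 < m ->
  extension_property D M d (fun y => ~ d a y < m).
Proof.
  intros HD0 HM HmD Hm0 n p r Hinj Hr Hcompat.
  pose proof HM as [Hmet [_ [_ [[HdD _] _]]]].
  assert (Hsym := dist_sym M d Hmet). assert (Htri := dist_triangle M d Hmet).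
  destruct (in_UD_extension_property D M d HD0 HM n p r) as [z0 [_ Hz0]]; auto.
  { intros i Hi. split; [exact I | apply Hr; auto]. }
  set (delta := Rmax m (d a z0)).
  assert (Hm_delta : m <= delta) by apply Rmax_l.
  assert (Hz0_delta : d a z0 <= delta) by apply Rmax_r.
  assert (Hdelta : forall i, (i < n)%nat ->
            d a (p i) <= delta + r i /\ delta <= r i + d a (p i) /\ r i <= delta + d a (p i)).
  { intros i Hi. destruct (Hr i Hi) as [Hp [_ Hri]]. pose proof (Hz0 i Hi).
    pose proof (Htri a z0 (p i)). pose proof (Htri z0 a (p i)). pose proof (Htri a (p i) z0).
    pose proof (Hsym z0 a). pose proof (Hsym (p i) z0).
    split; [lra | split; [apply Rmax_lub | ]]; lra. }
  set (p' := fun i => if Nat.ltb i n then p i else a).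
  set (r' := fun i => if Nat.ltb i n then r i else delta).
  destruct (in_UD_extension_property D M d HD0 HM (S n) p' r') as [z [_ Hz]].
  - intros i j Hi Hj. unfold p'.
    destruct (Nat.ltb_spec i n), (Nat.ltb_spec j n); intros E; auto; try lia.
    + destruct (Hr i H) as [Hp _]. rewrite E, (dist_self M d Hmet) in Hp. lra.
    + destruct (Hr j H0) as [Hp _]. rewrite <- E, (dist_self M d Hmet) in Hp. lra.
  - intros i Hi. unfold p', r'. split; [exact I |].
    destruct (Nat.ltb_spec i n); [apply Hr; auto |].
    split; [apply Rmax_case; auto | lra].
  - intros i j Hi Hj. unfold p', r'.
    destruct (Nat.ltb_spec i n), (Nat.ltb_spec j n).
    + apply Hcompat; auto.
    + pose proof (Hdelta i H). rewrite Hsym. lra.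
    + pose proof (Hdelta j H0). lra.
    + rewrite (dist_self M d Hmet). lra.
  - exists z. split.
    + assert (Hza := Hz n (Nat.lt_succ_diag_r n)). unfold p', r' in Hza.
      rewrite Nat.ltb_irrefl in Hza. rewrite Hsym, Hza. lra.
    + intros i Hi. specialize (Hz i ltac:(lia)). unfold p', r' in Hz.
      rewrite (proj2 (Nat.ltb_lt i n) Hi) in Hz. exact Hz.
Qed.

Lemma countable_enumeration (T : Type) (S : T -> Prop) (s0 : T) :
  countable_type T -> S s0 ->
  exists e : nat -> T, (forall k, S (e k)) /\ (forall x, S x -> exists k, e k = x).
Proof.
  intros [c Hc] Hs0.
  set (P := fun k x => S x /\ forall y, S y -> c y = k -> x = y).
  assert (HP : forall k, P k (epsilon (inhabits s0) (P k))).
  { intros k. apply epsilon_spec.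
    destruct (classic (exists y, S y /\ c y = k)) as [[y [Hy Hyk]] | Hnone].
    - exists y. split; auto. intros y' Hy' Hy'k. apply Hc. congruence.
    - exists s0. split; auto. intros y Hy Hyk. exfalso. eauto. }
  exists (fun k => epsilon (inhabits s0) (P k)). split.
  - intros k. apply HP.
  - intros x Hx. exists (c x). apply HP; auto.
Qed.

Section BackAndForth.
Variables (D : list R) (T : Type) (d : T -> T -> R).
Hypothesis Hmet : is_metric T d.
Hypothesis HdD : forall x y, In (d x y) D.

Record piso := Piso { plen : nat; psrc : nat -> T; pdst : nat -> T }.

Definition is_piso (SA SB : T -> Prop) (p : piso) : Prop :=
  (forall i j, (i < plen p)%nat -> (j < plen p)%nat ->
     d (pdst p i) (pdst p j) = d (psrc p i) (psrc p j)) /\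
  (forall i, (i < plen p)%nat -> SA (psrc p i) /\ SB (pdst p i)) /\
  (forall i j, (i < plen p)%nat -> (j < plen p)%nat -> psrc p i = psrc p j -> i = j).

Definition piso_extends (p q : piso) : Prop :=
  (plen p <= plen q)%nat /\
  forall i, (i < plen p)%nat -> psrc q i = psrc p i /\ pdst q i = pdst p i.

Definition piso_swap (p : piso) : piso := Piso (plen p) (pdst p) (psrc p).

Definition piso_snoc (p : piso) (x y : T) : piso :=
  Piso (S (plen p)) (fun i => if Nat.ltb i (plen p) then psrc p i else x)
                    (fun i => if Nat.ltb i (plen p) then pdst p i else y).

Lemma piso_extends_refl p : piso_extends p p.
Proof. split; auto. Qed.

Lemma piso_extends_trans p q s :
  piso_extends p q -> piso_extends q s -> piso_extends p s.
Proof.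
  intros [Hpq Epq] [Hqs Eqs]. split; [lia |]. intros i Hi.
  destruct (Epq i Hi) as [<- <-]. apply Eqs. lia.
Qed.

Lemma piso_extends_snoc p x y : piso_extends p (piso_snoc p x y).
Proof.
  split; simpl; [lia |]. intros i Hi. rewrite (proj2 (Nat.ltb_lt i _) Hi). auto.
Qed.

Lemma is_piso_swap SA SB p : is_piso SA SB p -> is_piso SB SA (piso_swap p).
Proof.
  intros [Hiso [HS Hinj]]. split; [| split]; simpl.
  - intros i j Hi Hj. symmetry. apply Hiso; auto.
  - intros i Hi. destruct (HS i Hi). auto.
  - intros i j Hi Hj E. apply Hinj; auto. apply (dist_eq0 T d Hmet).
    rewrite <- (Hiso i j Hi Hj), E. apply (dist_self T d Hmet).
Qed.

(* The new point [x] is matched with a solution [y] of the extension problem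
   "at distance [d x (psrc i)] from [pdst i]". *)
Lemma forth SA SB p x :
  extension_property D T d SB -> is_piso SA SB p -> SA x ->
  exists q, is_piso SA SB q /\ piso_extends p q /\
    exists i, (i < plen q)%nat /\ psrc q i = x.
Proof.
  intros HSB Hp Hx.
  destruct (classic (exists i, (i < plen p)%nat /\ psrc p i = x)) as [Hold | Hnew].
  { exists p. auto using piso_extends_refl. }
  assert (Hfresh : forall i, (i < plen p)%nat -> psrc p i <> x).
  { intros i Hi E. apply Hnew. eauto. }
  pose proof Hp as [Hiso [HS Hinj]].
  pose proof (dist_sym T d Hmet) as Hsym. pose proof (dist_triangle T d Hmet) as Htri.
  destruct (HSB (plen p) (pdst p) (fun i => d x (psrc p i))) as [y [Hy Hyd]].
  - apply (is_piso_swap _ _ _ Hp).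
  - intros i Hi. split; [apply HS; auto | split; [apply HdD |]].
    destruct (dist_nonneg T d Hmet x (psrc p i)) as [Hlt | Heq]; auto.
    destruct (Hfresh i Hi). symmetry. apply (dist_eq0 T d Hmet). auto.
  - intros i j Hi Hj. rewrite Hiso by auto.
    pose proof (Htri (psrc p i) x (psrc p j)). pose proof (Htri x (psrc p j) (psrc p i)).
    pose proof (Hsym x (psrc p i)). pose proof (Hsym (psrc p i) (psrc p j)). lra.
  - exists (piso_snoc p x y). split; [| split].
    + split; [| split]; simpl.
      * intros i j Hi Hj.
        destruct (Nat.ltb_spec i (plen p)), (Nat.ltb_spec j (plen p)).
        -- apply Hiso; auto.
        -- rewrite Hsym, (Hsym _ x). apply Hyd; auto.
        -- apply Hyd; auto.
        -- rewrite !(dist_self T d Hmet). reflexivity.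
      * intros i Hi. destruct (Nat.ltb_spec i (plen p)); auto.
      * intros i j Hi Hj.
        destruct (Nat.ltb_spec i (plen p)), (Nat.ltb_spec j (plen p)); intros E.
        -- apply Hinj; auto.
        -- destruct (Hfresh i); auto.
        -- destruct (Hfresh j); auto.
        -- lia.
    + apply piso_extends_snoc.
    + exists (plen p). simpl. rewrite Nat.ltb_irrefl. split; [lia | reflexivity].
Qed.

Lemma back SA SB p y :
  extension_property D T d SA -> is_piso SA SB p -> SB y ->
  exists q, is_piso SA SB q /\ piso_extends p q /\
    exists i, (i < plen q)%nat /\ pdst q i = y.
Proof.
  intros HSA Hp Hy.
  destruct (forth SB SA (piso_swap p) y HSA (is_piso_swap _ _ _ Hp) Hy)
    as [[n u v] [Hq [[Hle Hext] Hcov]]].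
  exists (Piso n v u). split; [| split].
  - apply (is_piso_swap _ _ _ Hq).
  - split; auto. intros i Hi. destruct (Hext i Hi). auto.
  - exact Hcov.
Qed.

Lemma forth_and_back SA SB p x y :
  extension_property D T d SA -> extension_property D T d SB ->
  is_piso SA SB p -> SA x -> SB y ->
  exists q, is_piso SA SB q /\ piso_extends p q /\
    (exists i, (i < plen q)%nat /\ psrc q i = x) /\
    (exists i, (i < plen q)%nat /\ pdst q i = y).
Proof.
  intros HSA HSB Hp Hx Hy.
  destruct (forth SA SB p x HSB Hp Hx) as [q1 [Hq1 [Hpq1 [i [Hi Hxi]]]]].
  destruct (back SA SB q1 y HSA Hq1 Hy) as [q2 [Hq2 [Hq12 Hcov]]].
  exists q2. split; [| split; [| split]]; auto.
  - eapply piso_extends_trans; eauto.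
  - exists i. destruct Hq12 as [Hle Hext]. split; [lia |].
    rewrite (proj1 (Hext i Hi)). exact Hxi.
Qed.

Lemma piso_union SA SB (c : nat -> piso) (t0 : T) :
  (forall k, is_piso SA SB (c k)) ->
  (forall k, piso_extends (c k) (c (S k))) ->
  (forall x, SA x -> exists k i, (i < plen (c k))%nat /\ psrc (c k) i = x) ->
  (forall y, SB y -> exists k i, (i < plen (c k))%nat /\ pdst (c k) i = y) ->
  exists f : T -> T,
    (forall x y, SA x -> SA y -> d (f x) (f y) = d x y) /\
    (forall x, SA x -> SB (f x)) /\
    (forall y, SB y -> exists x, SA x /\ f x = y).
Proof.
  intros Hc Hstep Hsrc Hdst.
  assert (Hmono : forall k k', (k <= k')%nat -> piso_extends (c k) (c k')).
  { induction 1; [apply piso_extends_refl | eapply piso_extends_trans; eauto]. }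
  set (paired := fun x y =>
         exists k i, (i < plen (c k))%nat /\ psrc (c k) i = x /\ pdst (c k) i = y).
  assert (Hpaired_iso : forall x y x' y', paired x y -> paired x' y' -> d y y' = d x x').
  { intros x y x' y' [k [i [Hi [<- <-]]]] [k' [i' [Hi' [<- <-]]]].
    destruct (Hmono k (max k k')) as [Hle Hext]; [lia |].
    destruct (Hmono k' (max k k')) as [Hle' Hext']; [lia |].
    destruct (Hext i Hi) as [<- <-]. destruct (Hext' i' Hi') as [<- <-].
    apply (Hc (max k k')); lia. }
  assert (Hpaired_S : forall x y, paired x y -> SA x /\ SB y).
  { intros x y [k [i [Hi [<- <-]]]]. apply (Hc k); auto. }
  set (f := fun x => epsilon (inhabits t0) (paired x)).
  assert (Hf : forall x, SA x -> paired x (f x)).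
  { intros x Hx. apply epsilon_spec. destruct (Hsrc x Hx) as [k [i [Hi Hxi]]].
    exists (pdst (c k) i), k, i. auto. }
  exists f. split; [| split].
  - intros x y Hx Hy. apply Hpaired_iso; auto.
  - intros x Hx. apply (Hpaired_S x), Hf; auto.
  - intros y Hy. destruct (Hdst y Hy) as [k [i [Hi Hyi]]].
    assert (Hxy : paired (psrc (c k) i) y) by (exists k, i; auto).
    set (x := psrc (c k) i) in Hxy. destruct (Hpaired_S x y Hxy) as [Hx _].
    exists x. split; auto. apply (dist_eq0 T d Hmet).
    rewrite (Hpaired_iso x (f x) x y (Hf x Hx) Hxy). apply (dist_self T d Hmet).
Qed.

(* Cantor's back-and-forth argument, the chain [c] alternately absorbing the
   [k]-th points of enumerations of [SA] and [SB]. *)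
Theorem back_and_forth SA SB (t0 : T) :
  countable_type T -> extension_property D T d SA -> extension_property D T d SB ->
  exists f : T -> T,
    (forall x y, SA x -> SA y -> d (f x) (f y) = d x y) /\
    (forall x, SA x -> SB (f x)) /\
    (forall y, SB y -> exists x, SA x /\ f x = y).
Proof.
  intros Hcount HSA HSB.
  destruct (extension_property_inhabited D T d SA t0 HSA) as [a0 Ha0].
  destruct (extension_property_inhabited D T d SB t0 HSB) as [b0 Hb0].
  destruct (countable_enumeration T SA a0 Hcount Ha0) as [eA [HeA HsA]].
  destruct (countable_enumeration T SB b0 Hcount Hb0) as [eB [HeB HsB]].
  destruct (choice (fun (kp : nat * piso) q =>
              is_piso SA SB (snd kp) ->
              is_piso SA SB q /\ piso_extends (snd kp) q /\
              (exists i, (i < plen q)%nat /\ psrc q i = eA (fst kp)) /\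
              (exists i, (i < plen q)%nat /\ pdst q i = eB (fst kp))))
    as [next Hnext].
  { intros [k p]. destruct (classic (is_piso SA SB p)) as [Hp | Hp].
    - destruct (forth_and_back SA SB p (eA k) (eB k)) as [q Hq]; auto.
      exists q. auto.
    - exists p. intros Hp'. contradiction. }
  set (c := fix c k := match k with
                       | O => Piso 0 (fun _ => t0) (fun _ => t0)
                       | S k => next (k, c k) end).
  assert (Hc : forall k, is_piso SA SB (c k)).
  { induction k as [| k IH].
    - split; [| split]; simpl; intros; lia.
    - apply (Hnext (k, c k) IH). }
  apply (piso_union SA SB c t0 Hc).
  - intros k. apply (Hnext (k, c k) (Hc k)).
  - intros x Hx. destruct (HsA x Hx) as [k <-]. exists (S k).
    apply (Hnext (k, c k) (Hc k)).
  - intros y Hy. destruct (HsB y Hy) as [k <-]. exists (S k).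
    apply (Hnext (k, c k) (Hc k)).
Qed.

End BackAndForth.

Theorem lemma9p1
  (D : list R) (HD0 : In 0 D) (HDnn : forall r, In r D -> 0 <= r)
  (Huniv : universal D)
  (B1 B2 : list R) (HB1 : is_block D B1) (HB2 : is_block D B2) (Hne : B1 <> B2)
  (B : list R) (HB : is_block D B) (r0 : R) (Hr0 : is_min_pos D r0) (Hr0B : In r0 B)
  (m : R) (Hm : is_max_of B m)
  (M : Type) (d : M -> M -> R) (HM : in_UD D M d) (a : M) :
  exists f : M -> M,
    (forall x y, d (f x) (f y) = d x y) /\
    (forall y, ~ (d a y < m) <-> exists x, f x = y).
Proof.
  assert (HmD : In m D /\ 0 < m).
  { destruct HB as [b0 [rest [_ [Hpos _]]]]. apply Hpos, Hm. }
  destruct HmD as [HmD Hm0].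
  pose proof HM as [Hmet [Hcount [_ [[HdD _] _]]]].
  destruct (back_and_forth D M d Hmet HdD (fun _ => True) (fun y => ~ d a y < m) a Hcount)
    as [f [Hiso [Hinto Honto]]].
  - apply in_UD_extension_property; auto.
  - apply extension_property_ball_complement; auto.
  - exists f. split; [intros x y; apply Hiso; exact I |].
    intros y. split.
    + intros Hy. destruct (Honto y Hy) as [x [_ <-]]. eauto.
    + intros [x <-]. apply Hinto. exact I.
Qed.
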